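(* Let $R=K[x_1,\ldots,x_n]$ be a polynomial ring over a field $K$, $I\subset R$ a monomial ideal, $\ell$ a positive integer, $v$ a square-free monomial of $R$ with $v\in I^\ell$, and $\mathfrak{p}$ a monomial prime ideal of $R$ such that, for some positive integer $s$, $\mathfrak{p}\setminus x_i\notin\mathrm{Ass}(R/(I\setminus x_i)^s)$ for every variable $x_i$ dividing $v$. If $\mathfrak{p}\in\mathrm{Ass}(R/I^s)$, then $s>\ell$.
   Context: For a monomial ideal $I\subset R$, $\mathcal{G}(I)$ denotes its unique minimal set of monomial generators. For a variable $x_i$, the deletion $I\setminus x_i$ is the monomial ideal of $R$ generated by those $u\in\mathcal{G}(I)$ with $x_i\nmid u$. For a monomial prime ideal $\mathfrak{p}$ (generated by variables), $\mathfrak{p}\setminus x_i$ is the ideal generated by the variables of $\mathfrak{p}$ other than $x_i$. *)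

From HB Require Import structures.
From mathcomp Require Import all_boot all_algebra.
From mathcomp Require Import mpoly.
Set Implicit Arguments. Unset Strict Implicit. Unset Printing Implicit Defensive.
Import GRing.Theory.
Local Open Scope ring_scope.

Definition ideal_gen (R : comNzRingType) (S : R -> Prop) : R -> Prop :=
  fun f => exists (k : nat) (r g : 'I_k -> R),
    (forall j, S (g j)) /\ f = \sum_(j < k) r j * g j.

Definition ideal_pow (R : comNzRingType) (I : R -> Prop) (s : nat) : R -> Prop :=
  ideal_gen (fun f => exists g : 'I_s -> R,
    (forall j, I (g j)) /\ f = \prod_(j < s) g j).

Definition prime_ideal (R : comNzRingType) (P : R -> Prop) : Prop :=
  [/\ P 0, (forall a b, P a -> P b -> P (a + b)),
      (forall a b, P b -> P (a * b)), ~ P 1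
    & (forall a b, P (a * b) -> P a \/ P b)].

(* P \in Ass(R/J): P is a prime ideal of the form (J : f) for some f in R. *)
Definition Ass (R : comNzRingType) (J P : R -> Prop) : Prop :=
  prime_ideal P /\ exists f : R, forall g, P g <-> J (g * f).

Definition monomial_ideal_gen (K : fieldType) (n : nat)
  (A : 'X_{1..n} -> Prop) : {mpoly K[n]} -> Prop :=
  ideal_gen (fun f => exists2 m, A m & f = 'X_[m]).

Definition is_monomial_ideal (K : fieldType) (n : nat)
  (I : {mpoly K[n]} -> Prop) : Prop :=
  exists A : 'X_{1..n} -> Prop, forall f, I f <-> monomial_ideal_gen A f.

Definition min_gens (K : fieldType) (n : nat) (I : {mpoly K[n]} -> Prop)
  : 'X_{1..n} -> Prop :=
  fun m => I 'X_[m] /\ forall m', I 'X_[m'] -> (m' <= m)%MM -> m' = m.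

Definition deletion (K : fieldType) (n : nat) (I : {mpoly K[n]} -> Prop)
  (i : 'I_n) : {mpoly K[n]} -> Prop :=
  monomial_ideal_gen (fun m => min_gens I m /\ m i = 0%N).

Definition monoprime (K : fieldType) (n : nat) (P : {set 'I_n})
  : {mpoly K[n]} -> Prop :=
  ideal_gen (fun f => exists2 j, j \in P & f = 'X_j).

Definition squarefree (n : nat) (v : 'X_{1..n}) : Prop := forall i, (v i <= 1)%N.

From mathcomp Require Import all_boot all_algebra.
From mathcomp Require Import mpoly.
From Stdlib Require Import Classical.
From mathcomp Require Import ring.
Set Implicit Arguments. Unset Strict Implicit. Unset Printing Implicit Defensive.
Import GRing.Theory.
Local Open Scope ring_scope.

(* Suppose s <= l.  Everything in sight is monomial, so the associated prime
   P = (I^s : f) is already a colon (I^s : x^u) by a single monomial.  As P is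
   proper, x^u is not in I^s, whereas v is in I^l, hence in I^s; so v does not
   divide u and, v being square-free, some x_i divides v but not u.  A monomial
   lies in I \ x_i exactly when its x_i-free part lies in I, and with u free of
   x_i this turns P = (I^s : x^u) into P \ x_i = ((I \ x_i)^s : x^u),
   contradicting the hypothesis on x_i. *)

Section IdealGen.
Variable R : comNzRingType.

Definition is_ideal (J : R -> Prop) :=
  [/\ J 0, forall x y, J x -> J y -> J (x + y) & forall a x, J x -> J (a * x)].

Lemma idealB (J : R -> Prop) x y : is_ideal J -> J x -> J y -> J (x - y).
Proof. by case=> _ JD JM Jx Jy; rewrite -mulN1r; apply: JD => //; apply: JM. Qed.

Variable S : R -> Prop.

Lemma mem_ideal_gen x : S x -> ideal_gen S x.
Proof.
by move=> Sx; exists 1%N, (fun _ => 1), (fun _ => x); rewrite big_ord1 mul1r.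
Qed.

Lemma ideal_gen_is_ideal : is_ideal (ideal_gen S).
Proof.
split.
- by exists 0%N, (fun _ => 0), (fun _ => 0); split=> [[]//|]; rewrite big_ord0.
- move=> _ _ [k1 [r1 [g1 [Sg1 ->]]]] [k2 [r2 [g2 [Sg2 ->]]]].
  exists (k1 + k2)%N, (fun j => match split j with inl a => r1 a | inr b => r2 b end),
    (fun j => match split j with inl a => g1 a | inr b => g2 b end); split.
    by move=> j; case: (split j).
  rewrite big_split_ord /=; congr (_ + _); apply: eq_bigr => j _.
    by rewrite (unsplitK (inl j)).
  by rewrite (unsplitK (inr j)).
- move=> a _ [k [r [g [Sg ->]]]]; exists k, (fun j => a * r j), g; split=> //.
  by rewrite big_distrr /=; apply: eq_bigr => j _; rewrite mulrA.
Qed.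

Lemma ideal_gen_min (J : R -> Prop) g :
  is_ideal J -> (forall x, S x -> J x) -> ideal_gen S g -> J g.
Proof.
case=> J0 JD JM SJ [k [r [h [Sh ->]]]].
by elim/big_rec: _ => // j y _ Jy; apply: JD Jy; apply/JM/SJ.
Qed.

End IdealGen.

Section MonomialIdeals.
Variables (K : fieldType) (n : nat).
Notation poly := {mpoly K[n]}.
Notation mon := 'X_{1..n}.

Definition all_msupp (D : mon -> Prop) (g : poly) :=
  forall m, m \in msupp g -> D m.

Definition upclosed (D : mon -> Prop) :=
  forall a b, D a -> (a <= b)%MM -> D b.

Lemma all_msuppX D m : all_msupp D 'X_[m] <-> D m.
Proof.
rewrite /all_msupp msuppX; split=> [|Dm m']; first by apply; rewrite mem_seq1.
by rewrite mem_seq1 => /eqP ->.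
Qed.

Lemma all_msuppMX D u g :
  all_msupp D (g * 'X_[u]) <-> all_msupp (fun m => D (u + m)%MM) g.
Proof.
split=> Dg m.
  by move=> gm; apply: Dg; rewrite (perm_mem (msuppMX _ _)) map_f.
by rewrite (perm_mem (msuppMX _ _)) => /mapP [m' gm' ->]; apply: Dg.
Qed.

Lemma all_msupp_ideal D : upclosed D -> is_ideal (all_msupp D).
Proof.
move=> Dup; split.
- by move=> m; rewrite msupp0.
- by move=> x y Dx Dy m /msuppD_le; rewrite mem_cat => /orP [/Dx | /Dy].
- move=> a x Dx m /msuppM_le /allpairsP [[m1 m2] /= [_ xm2 ->]].
  exact: Dup (Dx _ xm2) (lem_addl _ _).
Qed.

Lemma idealX_up (J : poly -> Prop) a b :
  is_ideal J -> J 'X_[a] -> (a <= b)%MM -> J 'X_[b].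
Proof. by case=> _ _ JM Ja le_ab; rewrite -(submK le_ab) mpolyXD; apply: JM. Qed.

Lemma ideal_all_msupp (J : poly -> Prop) D g :
  is_ideal J -> (forall m, D m -> J 'X_[m]) -> all_msupp D g -> J g.
Proof.
case=> J0 JD JM DJ Dg; rewrite (mpolyE g) big_seq.
by elim/big_rec: _ => // m y gm Jy; apply: JD Jy; rewrite -mul_mpolyC; apply/JM/DJ/Dg.
Qed.

Lemma monomial_ideal_genP A g :
  monomial_ideal_gen A g <-> all_msupp (fun m => exists2 a, A a & (a <= m)%MM) g.
Proof.
split.
- apply: ideal_gen_min.
    apply: all_msupp_ideal => a b [w Aw le_wa] le_ab.
    by exists w => //; apply: lepm_trans le_ab.
  by move=> _ [a Aa ->]; apply/all_msuppX; exists a => //; apply: lepm_refl.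
- apply: ideal_all_msupp; first exact: ideal_gen_is_ideal.
  move=> m [a Aa le_am]; apply: idealX_up le_am; first exact: ideal_gen_is_ideal.
  by apply: mem_ideal_gen; exists a.
Qed.

Lemma monomial_idealP (I : poly -> Prop) : is_monomial_ideal I ->
  upclosed (fun m => I 'X_[m]) /\ forall g, I g <-> all_msupp (fun m => I 'X_[m]) g.
Proof.
case=> A IA; have IX m : I 'X_[m] <-> exists2 a, A a & (a <= m)%MM.
  by rewrite IA monomial_ideal_genP all_msuppX.
split=> [a b /IX [w Aw le_wa] le_ab | g].
  by apply/IX; exists w => //; apply: lepm_trans le_ab.
by rewrite IA monomial_ideal_genP; split=> Ig m /Ig /IX.
Qed.

Definition has_var (Q : {set 'I_n}) (m : mon) := [exists j in Q, 0 < m j]%N.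

Lemma has_var0 Q : has_var Q 0%MM = false.
Proof. by apply/existsP => [[j /andP [_]]]; rewrite mnm0E. Qed.

Lemma has_varD Q a b : has_var Q (a + b)%MM = has_var Q a || has_var Q b.
Proof.
apply/existsP/orP => [[j /andP [jQ]] | [] /existsP [j /andP [jQ pos]]].
  by rewrite mnmDE addn_gt0 => /orP [] pos; [left | right];
    apply/existsP; exists j; rewrite jQ.
all: by exists j; rewrite jQ mnmDE addn_gt0 pos ?orbT.
Qed.

Lemma has_var_up Q : upclosed (has_var Q).
Proof. by move=> a b Qa le_ab; rewrite -(submK le_ab) has_varD Qa orbT. Qed.

Lemma monoprimeP Q g : monoprime Q g <-> all_msupp (has_var Q) g.
Proof.
split.
- apply: ideal_gen_min; first exact/all_msupp_ideal/has_var_up.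
  move=> _ [j jQ ->]; apply/all_msuppX/existsP; exists j.
  by rewrite jQ mnm1E eqxx.
- apply: ideal_all_msupp; first exact: ideal_gen_is_ideal.
  move=> m /existsP [j /andP [jQ pos]].
  apply: (@idealX_up _ U_(j)%MM); first exact: ideal_gen_is_ideal.
    by apply: mem_ideal_gen; exists j.
  by rewrite lep1mP -lt0n.
Qed.

Section MonomialPrime.
Variable Q : {set 'I_n}.

Definition var_part (p : poly) :=
  \sum_(m <- msupp p | has_var Q m) p@_m *: 'X_[m].
Definition free_part (p : poly) :=
  \sum_(m <- msupp p | ~~ has_var Q m) p@_m *: 'X_[m].

Lemma var_free_part p : p = var_part p + free_part p.
Proof. by rewrite {1}(mpolyE p) (bigID (has_var Q)). Qed.

Lemma msupp_filter_sum (c : pred mon) (p : poly) m :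
  m \in msupp (\sum_(m' <- msupp p | c m') p@_m' *: 'X_[m']) -> c m.
Proof.
move=> /msupp_sum_le /flattenP [_ /mapP [m' pm' ->]].
move=> /msuppZ_le; rewrite msuppX mem_seq1 => /eqP ->.
by move: pm'; rewrite mem_filter => /andP [].
Qed.

Lemma var_part_mem p : monoprime Q (var_part p).
Proof. by apply/monoprimeP => m; apply: msupp_filter_sum. Qed.

Lemma monoprime_prime : prime_ideal (@monoprime K n Q).
Proof.
have PI := @ideal_gen_is_ideal _ (fun f : poly => exists2 j, j \in Q & f = 'X_j).
have [P0 PD PM] := PI.
split=> //.
  by rewrite -mpolyX0 => /monoprimeP/all_msuppX; rewrite has_var0.
move=> g h Pgh; apply: NNPP => /not_or_and [Pg Ph].
have free_part_neq0 p : ~ monoprime Q p -> free_part p != 0.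
  move=> Pp; apply/eqP => p0; apply: Pp.
  by rewrite (var_free_part p) p0 addr0; apply: var_part_mem.
have Pfree : monoprime Q (free_part g * free_part h).
  have -> : free_part g * free_part h
            = g * h - var_part g * h - free_part g * var_part h.
    move: (var_free_part g) (var_free_part h).
    move: (var_part g) (free_part g) (var_part h) (free_part h).
    by move=> ? ? ? ? -> ->; ring.
  apply: idealB => //; last exact/PM/var_part_mem.
  by apply: idealB => //; rewrite mulrC; apply/PM/var_part_mem.
have := mulf_neq0 (free_part_neq0 _ Pg) (free_part_neq0 _ Ph).
rewrite -msupp_eq0; case E: msupp => [//|m ms] _.
have : m \in msupp (free_part g * free_part h) by rewrite E mem_head.
move=> /[dup] /((monoprimeP _ _).1 Pfree).
move=> /[swap] /msuppM_le /allpairsP [[a b] /= [ga hb ->]].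
by rewrite has_varD (negbTE (msupp_filter_sum ga)) (negbTE (msupp_filter_sum hb)).
Qed.

End MonomialPrime.

Definition msum (ts : seq mon) : mon := (\sum_(x <- ts) x)%MM.

Lemma lem_msum x ts : x \in ts -> (x <= msum ts)%MM.
Proof. by move=> xts; rewrite /msum (big_rem x) //=; apply: lem_addr. Qed.

Lemma msum_take k ts : (msum (take k ts) <= msum ts)%MM.
Proof. by rewrite -{2}(cat_take_drop k ts) /msum big_cat; apply: lem_addr. Qed.

Lemma msupp_prod s (h : 'I_s -> poly) m : m \in msupp (\prod_(k < s) h k) ->
  exists ts, [/\ size ts = s, forall k : 'I_s, nth 0%MM ts k \in msupp (h k)
                 & m = msum ts].
Proof.
elim: s h m => [|s IH] h m.
  rewrite big_ord0 -mpolyX0 msuppX mem_seq1 => /eqP ->.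
  by exists [::]; split=> //; [case | rewrite /msum big_nil].
rewrite big_ord_recl => /msuppM_le /allpairsP [[m1 m2] /= [hm1 hm2 ->]].
have [ts [size_ts ts_h ->]] := IH _ _ hm2.
exists (m1 :: ts); split; first by rewrite /= size_ts.
  case=> [[|k] lt_k] /=.
    by move: hm1; congr (_ \in msupp (h _)); apply: val_inj.
  have := ts_h (Ordinal (lt_k : (k < s)%N)).
  by congr (_ \in msupp (h _)); apply: val_inj.
by rewrite /msum big_cons.
Qed.

(* The monomials of the s-th power of the monomial ideal whose monomials are D. *)
Definition mon_pow (D : mon -> Prop) (s : nat) (m : mon) :=
  exists ts, [/\ size ts = s, forall x, x \in ts -> D x & (msum ts <= m)%MM].

Lemma mon_pow_up D s : upclosed (mon_pow D s).
Proof.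
move=> a b [ts [size_ts Dts le_a]] le_ab; exists ts; split=> //.
exact: lepm_trans le_ab.
Qed.

Lemma mon_pow_le D l s m : (s <= l)%N -> mon_pow D l m -> mon_pow D s m.
Proof.
move=> le_sl [ts [size_ts Dts le_m]]; exists (take s ts); split.
- by rewrite size_takel // size_ts.
- by move=> x /mem_take; apply: Dts.
- exact: lepm_trans (msum_take _ _) le_m.
Qed.

Lemma ideal_powP (J : poly -> Prop) D s :
  (forall f, J f <-> all_msupp D f) ->
  forall g, ideal_pow J s g <-> all_msupp (mon_pow D s) g.
Proof.
move=> JD g; split.
- apply: ideal_gen_min; first exact/all_msupp_ideal/mon_pow_up.
  move=> _ [h [Jh ->]] m /msupp_prod [ts [size_ts ts_h ->]].
  exists ts; split=> //; last exact: lepm_refl.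
  move=> x xts; have lt_x : (index x ts < s)%N by rewrite -size_ts index_mem.
  by have := ts_h (Ordinal lt_x); rewrite /= nth_index //; apply: (JD _).1.
- apply: ideal_all_msupp; first exact: ideal_gen_is_ideal.
  move=> m [ts [size_ts Dts le_m]]; apply: idealX_up le_m.
    exact: ideal_gen_is_ideal.
  apply: mem_ideal_gen; exists (fun j : 'I_s => 'X_[nth 0%MM ts j]); split.
    by move=> j; apply/JD/all_msuppX/Dts/mem_nth; rewrite size_ts.
  by rewrite /msum -mpolyX_prod (big_nth 0%MM) big_mkord size_ts.
Qed.

Section PrimeColon.
Variables (C D : mon -> Prop).
Hypotheses (D_up : upclosed D) (C_prime : forall a b, C (a + b)%MM -> C a \/ C b).
Hypothesis C_proper : ~ C 0%MM.

(* A prime that is an intersection of colons (D : x^m), m in M, is one of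
   them: if (D : x^m0) is not contained in C, pick g0 in it outside C; then
   C is also the intersection of the colons (D : x^(g0 + m)), m in M. *)
Lemma prime_colon_single (M : seq mon) :
  (forall g, C g <-> forall m, m \in M -> D (g + m)%MM) ->
  exists u, forall g, C g <-> D (g + u)%MM.
Proof.
have [k] := ubnP (size M); elim: k M => // k IH [|m0 M] /= lt_M CM.
  by case: C_proper; apply/CM.
case: (classic (exists g0, D (g0 + m0)%MM /\ ~ C g0))
  => [[g0 [D_g0 notC_g0]] | m0_colon]; last first.
  exists m0 => g; split=> [Cg | D_g]; first exact: (CM g).1 Cg m0 (mem_head _ _).
  by apply: NNPP => notC_g; apply: m0_colon; exists g.
apply: (IH [seq (g0 + m)%MM | m <- M]); first by rewrite size_map.
move=> g; split.
  move=> Cg _ /mapP [m Mm ->]; rewrite addmA [(g + g0)%MM]addmC -addmA.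
  apply: (D_up _ (lem_addl g0 _)).
  by have := (CM g).1 Cg m; apply; rewrite in_cons Mm orbT.
move=> D_g; have : C (g + g0)%MM.
  apply/CM => m; rewrite in_cons => /orP [/eqP -> | Mm].
    by apply: (D_up D_g0); rewrite -addmA; apply: lem_addl.
  by rewrite -addmA; apply/D_g/map_f.
by case/C_prime.
Qed.

End PrimeColon.

Lemma Ass_monoprime_colon (J : poly -> Prop) D Q :
  upclosed D -> (forall f, J f <-> all_msupp D f) -> Ass J (monoprime Q) ->
  exists u, forall m, has_var Q m <-> D (m + u)%MM.
Proof.
move=> D_up JD [_ [f Qf]]; apply: (@prime_colon_single _ _ _ _ _ (msupp f)) => //.
- by move=> a b; rewrite has_varD => /orP.
- by rewrite has_var0.
- move=> m; rewrite -(all_msuppX (has_var Q)) -monoprimeP Qf mulrC JD.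
  exact: all_msuppMX.
Qed.

Lemma Ass_monoprime_of_colon (J : poly -> Prop) D Q u :
  (forall f, J f <-> all_msupp D f) ->
  (forall m, has_var Q m <-> D (m + u)%MM) -> Ass J (monoprime Q).
Proof.
move=> JD QD; split; first exact: monoprime_prime.
exists 'X_[u] => g; rewrite monoprimeP JD all_msuppMX.
by split=> Dg m /Dg; rewrite addmC => /QD.
Qed.

Definition mdrop (i : 'I_n) (m : mon) : mon :=
  [multinom if k == i then 0%N else m k | k < n].

Lemma mdropE i (m : mon) k : mdrop i m k = if k == i then 0%N else m k.
Proof. by rewrite mnmE. Qed.

Lemma mdrop_le i (m : mon) : (mdrop i m <= m)%MM.
Proof. by apply/mnm_lepP => k; rewrite mdropE; case: ifP. Qed.

Lemma mdrop_lepm i a b : (a <= b)%MM -> (mdrop i a <= mdrop i b)%MM.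
Proof. by move=> /mnm_lepP le_ab; apply/mnm_lepP => k; rewrite !mdropE; case: ifP. Qed.

Lemma mdropD i a b : mdrop i (a + b)%MM = (mdrop i a + mdrop i b)%MM.
Proof. by apply/mnmP => k; rewrite !(mnmDE, mdropE); case: ifP. Qed.

Lemma mdrop_id i (m : mon) : m i = 0%N -> mdrop i m = m.
Proof. by move=> mi0; apply/mnmP => k; rewrite mdropE; case: eqP => // ->. Qed.

Lemma mdrop_msum i ts : mdrop i (msum ts) = msum [seq mdrop i x | x <- ts].
Proof.
rewrite /msum big_map; apply: (big_morph _ (mdropD i)).
by rewrite mdrop_id ?mnm0E.
Qed.

Lemma has_var_mdrop Q i m : has_var Q (mdrop i m) = has_var (Q :\ i) m.
Proof.
apply: eq_existsb => j; rewrite mdropE in_setD1.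
by case: eqP => [-> | _]; rewrite ?ltnn ?andbF.
Qed.

Lemma mdeg_ltm (m' m : mon) : (m' <= m)%MM -> m' <> m -> (mdeg m' < mdeg m)%N.
Proof.
move=> le_m'm ne_m'm; rewrite -(submK le_m'm) mdegD -{1}[mdeg m']add0n ltn_add2r.
rewrite lt0n mdeg_eq0; apply: contra_notN ne_m'm => /eqP d0.
by rewrite -(submK le_m'm) d0 add0m.
Qed.

Lemma min_gens_exists (I : poly -> Prop) m :
  I 'X_[m] -> exists2 w, min_gens I w & (w <= m)%MM.
Proof.
have [d] := ubnP (mdeg m); elim: d m => // d IH m lt_md Im.
case: (classic (exists m', [/\ I 'X_[m'], (m' <= m)%MM & m' <> m])).
  move=> [m' [Im' le_m'm ne_m'm]].
  have [|w min_w le_wm'] := IH m' _ Im'.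
    by apply: leq_trans (mdeg_ltm le_m'm ne_m'm) _; rewrite -ltnS.
  by exists w => //; apply: lepm_trans le_m'm.
move=> no_smaller; exists m; last exact: lepm_refl.
split=> // m' Im' le_m'm; apply: NNPP => ne_m'm.
by apply: no_smaller; exists m'.
Qed.

Lemma deletionP (I : poly -> Prop) i : upclosed (fun m => I 'X_[m]) ->
  forall g, deletion I i g <-> all_msupp (fun m => I 'X_[mdrop i m]) g.
Proof.
move=> I_up g; rewrite /deletion monomial_ideal_genP; split=> Ig m /Ig.
  case=> w [[Iw _] wi0] le_wm; apply: I_up Iw _.
  by rewrite -(mdrop_id wi0); apply: mdrop_lepm.
move=> /min_gens_exists [w min_w le_w]; exists w.
  split=> //; apply/eqP; rewrite -leqn0.
  by have /mnm_lepP/(_ i) := le_w; rewrite mdropE eqxx.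
exact: lepm_trans le_w (mdrop_le _ _).
Qed.

Lemma mon_pow_mdrop D i s m :
  mon_pow (fun x => D (mdrop i x)) s m <-> mon_pow D s (mdrop i m).
Proof.
split=> [[ts [size_ts Dts le_m]] | [ts [size_ts Dts le_m]]].
  exists [seq mdrop i x | x <- ts]; split.
  - by rewrite size_map.
  - by move=> _ /mapP [x xts ->]; apply: Dts.
  - by rewrite -mdrop_msum; apply: mdrop_lepm.
exists ts; split=> //; last exact: lepm_trans le_m (mdrop_le _ _).
move=> x xts; rewrite mdrop_id; first exact: Dts.
have /mnm_lepP/(_ i) := lepm_trans (lem_msum xts) le_m.
by rewrite mdropE eqxx leqn0 => /eqP.
Qed.

End MonomialIdeals.

Theorem proposition2p2 (K : fieldType) (n : nat) (I : {mpoly K[n]} -> Prop)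
  (l : nat) (v : 'X_{1..n}) (P : {set 'I_n}) (s : nat) :
  is_monomial_ideal I ->
  (0 < l)%N ->
  squarefree v ->
  ideal_pow I l 'X_[v] ->
  (0 < s)%N ->
  (forall i : 'I_n, (0 < v i)%N ->
     ~ Ass (ideal_pow (deletion I i) s) (@monoprime K n (P :\ i))) ->
  Ass (ideal_pow I s) (@monoprime K n P) ->
  (l < s)%N.
Proof.
move=> /monomial_idealP [I_up Ispec] _ v_sqfree Iv _ no_Ass_del Ass_P.
rewrite ltnNge; apply/negP => le_sl.
have [u Pu] := Ass_monoprime_colon (@mon_pow_up _ _ s) (ideal_powP s Ispec) Ass_P.
have v_pow : mon_pow (fun m => I 'X_[m]) s v.
  by apply: mon_pow_le le_sl _; apply/all_msuppX/(ideal_powP l Ispec).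
have not_pow_u : ~ mon_pow (fun m => I 'X_[m]) s u.
  by rewrite -[u]add0m -Pu has_var0.
have [i lt_ui_vi] : exists i, (u i < v i)%N.
  apply: NNPP => u_ge_v; apply: not_pow_u; apply: (mon_pow_up v_pow).
  apply/mnm_lepP => i; rewrite leqNgt; apply/negP => lt_ui_vi.
  by apply: u_ge_v; exists i.
have ui0 : u i = 0%N.
  by apply/eqP; rewrite -leqn0 -ltnS; apply: leq_trans lt_ui_vi (v_sqfree i).
have vi_pos : (0 < v i)%N by apply: leq_ltn_trans lt_ui_vi.
apply: (no_Ass_del i vi_pos (Ass_monoprime_of_colon (u := u) _ _)).
  exact: ideal_powP (deletionP i I_up).
move=> m; rewrite -has_var_mdrop Pu (mon_pow_mdrop (fun x => I 'X_[x])).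
by rewrite mdropD (mdrop_id ui0).
Qed.
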